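(* Let $X$ be an absolutely monotone quasi-lattice satisfying $\|x\|=\|\lceil x\rceil\|$ for all $x\in X$. Then $X$ is $1$-absolutely Davies-Ng regular.
   Context: A pre-ordered Banach space is a real Banach space $X$ with a cone $X_+$ ($X_++X_+\subseteq X_+$, $\lambda X_+\subseteq X_+$ for $\lambda\ge0$); $x\le y$ means $y-x\in X_+$. $X$ is absolutely monotone if $\pm x\le y$ implies $\|x\|\le\|y\|$. $X$ is $1$-absolutely Davies-Ng regular if it is absolutely monotone and approximately $1$-absolutely conormal (for all $x$ and $\varepsilon>0$ there is $a\in X_+$ with $\pm x\le a$ and $\|a\|<\|x\|+\varepsilon$). For subsets $A$, $\upsilon(A)$ is the set of upper bounds and $\mu(A)$ the set of minimal upper bounds. With $\sigma_{x,y}(z)=\|z-x\|+\|z-y\|$, a pre-ordered Banach space with closed cone is a $\upsilon$-quasi-lattice (resp. $\mu$-quasi-lattice) if for all $x,y$ the set $\upsilon(\{x,y\})$ (resp. $\mu(\{x,y\})$) is non-empty and contains a unique minimizer $x\tilde\vee y$ of $\sigma_{x,y}$ on it; a quasi-lattice is either. $\lceil x\rceil:=(-x)\tilde\vee x$. *)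

From HB Require Import structures.
From mathcomp Require Import all_boot all_order all_algebra.
From mathcomp Require Import all_classical all_reals all_analysis.
Set Implicit Arguments. Unset Strict Implicit. Unset Printing Implicit Defensive.
Import Order.TTheory GRing.Theory Num.Theory.
Import numFieldNormedType.Exports.
Local Open Scope classical_set_scope.
Local Open Scope ring_scope.

Section PreOrdered.
Variables (R : realType) (X : completeNormedModType R).

Definition is_cone (C : set X) : Prop :=
  (forall x y, C x -> C y -> C (x + y)) /\
  (forall (l : R) x, 0 <= l -> C x -> C (l *: x)).

Definition cle (C : set X) (x y : X) : Prop := C (y - x).

Definition abs_monotone (C : set X) : Prop :=
  forall x y : X, cle C x y -> cle C (- x) y -> `|x| <= `|y|.

Definition approx_1_abs_conormal (C : set X) : Prop :=
  forall (x : X) (e : R), 0 < e ->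
    exists a : X, [/\ C a, cle C x a, cle C (- x) a & `|a| < `|x| + e].

Definition abs_DaviesNg_regular_1 (C : set X) : Prop :=
  abs_monotone C /\ approx_1_abs_conormal C.

Definition ubounds (C : set X) (x y : X) : set X :=
  [set z | cle C x z /\ cle C y z].

Definition min_ubounds (C : set X) (x y : X) : set X :=
  [set z | ubounds C x y z /\
           forall w, ubounds C x y w -> cle C w z -> w = z].

Definition bset (mu : bool) (C : set X) (x y : X) : set X :=
  if mu then min_ubounds C x y else ubounds C x y.

Definition sigma (x y z : X) : R := `|z - x| + `|z - y|.

Definition is_qjoin (mu : bool) (C : set X) (x y z : X) : Prop :=
  bset mu C x y z /\ forall w, bset mu C x y w -> sigma x y z <= sigma x y w.

(* mu = false : upsilon-quasi-lattice ; mu = true : mu-quasi-lattice *)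
Definition quasi_lattice (mu : bool) (C : set X) : Prop :=
  closed C /\
  forall x y : X, (exists z, bset mu C x y z) /\
                  (exists! z, is_qjoin mu C x y z).

End PreOrdered.

From mathcomp Require Import all_boot all_order all_algebra.
From mathcomp Require Import all_classical all_reals all_analysis.
Set Implicit Arguments. Unset Strict Implicit.
Import Order.TTheory GRing.Theory Num.Theory.
Import numFieldNormedType.Exports.
Local Open Scope classical_set_scope.
Local Open Scope ring_scope.

(* The quasi-lattice ceiling of x is itself a witness of conormality: it
   dominates x and -x, hence is positive as the average of z - x and z + x,
   and by hypothesis it has the same norm as x. *)

Section ConeUpperBounds.
Variables (R : realType) (X : completeNormedModType R) (C : set X).

Lemma bset_ubounds (mu : bool) (x y z : X) :
  bset mu C x y z -> ubounds C x y z.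
Proof. by case: mu => // -[]. Qed.

Lemma quasi_lattice_qjoin (mu : bool) :
  quasi_lattice mu C -> forall x y : X, exists z, is_qjoin mu C x y z.
Proof. by move=> [_ qjoinC] x y; have [_ [z [qz _]]] := qjoinC x y; exists z. Qed.

Lemma cone_abs_ub_ge0 (x z : X) :
  is_cone C -> cle C (- x) z -> cle C x z -> C z.
Proof.
move=> [Cadd Cscale] le_nx_z le_x_z.
have Csum : C ((z - x) + (z - - x)) by exact: Cadd.
have -> : z = (2^-1 : R) *: ((z - x) + (z - - x)).
  rewrite opprK addrACA addNr addr0 scalerDr -scalerDl.
  by rewrite -[2^-1]mul1r -splitr scale1r.
by apply: Cscale => //; rewrite invr_ge0 ler0n.
Qed.

End ConeUpperBounds.

Theorem lemma7p1 (R : realType) (X : completeNormedModType R) (C : set X)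
  (mu : bool) :
  is_cone C ->
  abs_monotone C ->
  quasi_lattice mu C ->
  (forall x ceilx : X, is_qjoin mu C (- x) x ceilx -> `|x| = `|ceilx|) ->
  abs_DaviesNg_regular_1 C.
Proof.
move=> coneC monC qlC norm_ceil; split => // x e e_gt0.
have [z qjoin_z] := quasi_lattice_qjoin qlC (- x) x.
have [le_nx_z le_x_z] := bset_ubounds qjoin_z.1.
exists z; split=> //.
- exact: cone_abs_ub_ge0 le_nx_z le_x_z.
- by rewrite -(norm_ceil x z) // ltrDl.
Qed.
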